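(* Let $(\Omega_t)_{t\in(0,T)}$ be a family of open subsets of $\mathbb{R}^{n+1}$, $\bar\Omega_t=\phi_t(\bar\Omega)$ for a smooth family of diffeomorphisms $\phi_t$, evolving by $\frac{\partial x}{\partial t}=-\nabla f(x,t)$ for $x=\phi_t(q)\in\Omega_t$, where the smooth functions $f(t)$ satisfy \[ \frac{\partial f}{\partial t}+\Delta f=|\nabla f|^2+\frac{n+1}{2\tau}\quad\text{in }\Omega_t, \] and $\tau(t)>0$ satisfies $\frac{d\tau}{dt}=-1$, for $t\in(0,T)$. Then $W=\tau(2\Delta f-|\nabla f|^2)+f-(n+1)$ satisfies \[ \Big(\frac{d}{dt}+\Delta\Big)W=2\tau\Big|\nabla_i\nabla_j f-\frac{\delta_{ij}}{2\tau}\Big|^2+\nabla W\cdot\nabla f\quad\text{in }\Omega_t. \]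
   Context: For a function $F(x,t)$ on the moving domains, $\frac{dF}{dt}$ denotes the total time derivative along the trajectories of the flow, i.e. $\frac{dF}{dt}(\phi_t(q),t)=\frac{\partial}{\partial t}\big[F(\phi_t(q),t)\big]$; thus $\frac{dF}{dt}=\frac{\partial F}{\partial t}-\nabla F\cdot\nabla f$. All gradients, Laplacians and Hessians are Euclidean. *)

From HB Require Import structures.
From mathcomp Require Import all_boot all_order all_algebra.
From mathcomp Require Import all_classical all_reals all_analysis.
Set Implicit Arguments. Unset Strict Implicit. Unset Printing Implicit Defensive.
Import Order.TTheory GRing.Theory Num.Theory.
Import numFieldNormedType.Exports.
Local Open Scope classical_set_scope.
Local Open Scope ring_scope.

Section Calculus.
Variables (R : realType) (n : nat).
Notation V := 'rV[R]_(n.+1).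

Definition sp_pd (i : 'I_(n.+1)) (g : V -> R -> R) : V -> R -> R :=
  fun x t => derive1 (fun s : R => g (x + s *: delta_mx 0 i) t) 0.

Definition t_pd (g : V -> R -> R) : V -> R -> R :=
  fun x t => derive1 (fun s : R => g x s) t.

Definition pdir (d : option 'I_(n.+1)) (g : V -> R -> R) : V -> R -> R :=
  match d with Some i => sp_pd i g | None => t_pd g end.

Definition derivable_dir (d : option 'I_(n.+1)) (g : V -> R -> R) (x : V) (t : R) : Prop :=
  match d with
  | Some i => derivable (fun s : R => g (x + s *: delta_mx 0 i) t) 0 1
  | None => derivable (fun s : R => g x s) t 1
  end.

Definition iter_pd (ds : seq (option 'I_(n.+1))) (g : V -> R -> R) : V -> R -> R :=
  foldr pdir g ds.

Definition smooth_on (S : set (V * R)) (g : V -> R -> R) : Prop :=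
  forall ds : seq (option 'I_(n.+1)), forall p : V * R, S p ->
    (forall d, derivable_dir d (iter_pd ds g) p.1 p.2) /\
    {for p, continuous (fun q : V * R => iter_pd ds g q.1 q.2)}.

Definition grad (g : V -> R -> R) (x : V) (t : R) : V :=
  \row_i sp_pd i g x t.

Definition dotv (u v : V) : R := \sum_i u 0 i * v 0 i.

Definition lap (g : V -> R -> R) (x : V) (t : R) : R :=
  \sum_i sp_pd i (sp_pd i g) x t.

(* total time derivative along the flow dx/dt = - grad f (see context):
   dF/dt = dF/dt(partial) - grad F . grad f *)
Definition ddt (f F : V -> R -> R) (x : V) (t : R) : R :=
  t_pd F x t - dotv (grad F x t) (grad f x t).

End Calculus.

From HB Require Import structures.
From mathcomp Require Import all_boot all_order all_algebra.
From mathcomp Require Import all_classical all_reals all_analysis.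
From mathcomp Require Import ring lra.
Import Order.TTheory GRing.Theory Num.Theory.
Import numFieldNormedType.Exports.
Local Open Scope classical_set_scope.
Local Open Scope ring_scope.
Set Implicit Arguments. Unset Strict Implicit. Unset Printing Implicit Defensive.

(** Differentiating the equation for [f] once and twice in space, and commuting
    the partial derivatives of the smooth [f] (Schwarz), gives
      d_t (Lap f) = Lap |grad f|^2 - Lap (Lap f),
      d_t |grad f|^2 = 2 grad f . grad (|grad f|^2 - Lap f),
    while Bochner's formula for the flat metric reads
      Lap |grad f|^2 = 2 |Hess f|^2 + 2 grad f . grad (Lap f).
    Substituting these into d_t W + Lap W - 2 grad W . grad f, everything cancels
    except 2 tau |Hess f|^2 - 2 Lap f + (n+1)/(2 tau), which is the expansion of
    2 tau |Hess f - Id/(2 tau)|^2. *)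

Section MixedPartials.
Variable R : realType.

Lemma second_difference_mvt (G G1 G12 : R -> R -> R) (e a : R) :
  (forall u v : R, `|u| < e -> `|v| < e ->
     is_derive u 1 (fun u' => G u' v) (G1 u v) /\
     is_derive v 1 (fun v' => G1 u v') (G12 u v)) ->
  0 < a -> a < e ->
  exists xi eta, [/\ 0 < xi < a, 0 < eta < a &
    G a a - G a 0 - G 0 a + G 0 0 = G12 xi eta * (a * a)].
Proof.
move=> hd a0 ae.
have small w : 0 <= w <= a -> `|w| < e.
  by move=> /andP[w0 wa]; rewrite ger0_norm //; apply: le_lt_trans ae.
have aI : 0 <= a <= a by rewrite lexx ltW.
have zI : (0:R) <= 0 <= a by rewrite lexx ltW.
have [xi xiI Hxi] : exists2 xi, xi \in `]0, a[ &
    (G a a - G a 0) - (G 0 a - G 0 0) = (G1 xi a - G1 xi 0) * (a - 0).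
  apply: (MVT (f := fun u => G u a - G u 0)) => //.
  - move=> u; rewrite in_itv /= => /andP[u0 ua].
    have ur : `|u| < e by apply: small; rewrite !ltW.
    exact: is_deriveB (hd _ _ ur (small _ aI)).1 (hd _ _ ur (small _ zI)).1.
  - apply: derivable_within_continuous => u /small ur.
    apply: derivableB; first by have [[]] := hd u a ur (small _ aI).
    by have [[]] := hd u 0 ur (small _ zI).
move: xiI; rewrite in_itv /= => xiI.
have xir : `|xi| < e by apply: small; case/andP: xiI => xi0 xia; rewrite !ltW.
have [eta etaI Heta] : exists2 eta, eta \in `]0, a[ &
    G1 xi a - G1 xi 0 = G12 xi eta * (a - 0).
  apply: MVT => //.
  - move=> v; rewrite in_itv /= => /andP[v0 va].
    by apply: (hd _ _ xir (small v _)).2; rewrite !ltW.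
  - apply: derivable_within_continuous => v /small vr.
    by have [_ []] := hd xi v xir vr.
move: etaI; rewrite in_itv /= => etaI.
exists xi, eta; split => //.
by move: Hxi; rewrite Heta !subr0 -mulrA => <-; ring.
Qed.

Lemma mixed_partials_eq (H H1 H2 H12 H21 : R -> R -> R) (e : R) :
  0 < e ->
  (forall u v : R, `|u| < e -> `|v| < e ->
     [/\ is_derive u 1 (fun u' => H u' v) (H1 u v),
         is_derive v 1 (fun v' => H u v') (H2 u v),
         is_derive v 1 (fun v' => H1 u v') (H12 u v) &
         is_derive u 1 (fun u' => H2 u' v) (H21 u v)]) ->
  (forall eps, 0 < eps -> exists2 d : R, 0 < d & forall u v : R, `|u| < d -> `|v| < d ->
      `|H12 u v - H12 0 0| < eps /\ `|H21 u v - H21 0 0| < eps) ->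
  H12 0 0 = H21 0 0.
Proof.
move=> e0 hd hc; apply/eqP; rewrite -subr_eq0 -normr_le0.
apply/ler_addgt0Pr => eps eps0; rewrite add0r.
have [d d0 hcd] := hc _ (divr_gt0 eps0 (ltr0Sn _ 1)).
pose a := Num.min d e / 2.
have a0 : 0 < a by rewrite divr_gt0 // lt_min d0 e0.
have [ad ae] : a < d /\ a < e.
  have [md me] : Num.min d e <= d /\ Num.min d e <= e by rewrite !ge_min !lexx orbT.
  by rewrite /a; lra.
have [xi [eta [xiI etaI E1]]] :=
  @second_difference_mvt H H1 H12 e a
    (fun u v hu hv => let: And4 h1 _ h3 _ := hd u v hu hv in conj h1 h3) a0 ae.
have [eta' [xi' [etaI' xiI' E2]]] :=
  @second_difference_mvt (fun v u => H u v) (fun v u => H2 u v) (fun v u => H21 u v) e a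
    (fun v u hv hu => let: And4 _ h2 _ h4 := hd u v hu hv in conj h2 h4) a0 ae.
have H12E : H12 xi eta = H21 xi' eta'.
  have aa : a * a != 0 by rewrite mulf_neq0 // gt_eqF.
  by apply: (mulIf aa); rewrite -E1 -E2 /=; ring.
have near0 w : 0 < w < a -> `|w| < d by move=> /andP[w0 wa]; rewrite gtr0_norm //; lra.
have [c1 _] := hcd xi eta (near0 _ xiI) (near0 _ etaI).
have [_ c2] := hcd xi' eta' (near0 _ xiI') (near0 _ etaI').
have -> : H12 0 0 - H21 0 0 = (H21 xi' eta' - H21 0 0) - (H12 xi eta - H12 0 0).
  by rewrite H12E; ring.
apply: ltW; apply: le_lt_trans (ler_normB _ _) _; lra.
Qed.

End MixedPartials.

Section Translation.
Variable R : realType.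
Implicit Types (F : R -> R) (a : R).

Lemma derive1_translate F a : derive1 F a = derive1 (fun h => F (a + h)) 0.
Proof.
rewrite /derive1 addr0.
suff -> : (fun h => h^-1 *: (F (h + a) - F a))
        = (fun h => h^-1 *: (F (a + (h + 0)) - F a)) by [].
by apply: funext => h; rewrite addr0 (addrC a).
Qed.

Lemma is_derive_translate F a :
  derivable (fun h => F (a + h)) 0 1 ->
  is_derive a 1 F (derive1 (fun h => F (a + h)) 0).
Proof.
move=> dF; apply: DeriveDef; last by rewrite -derive1E derive1_translate.
apply/derivable1P.
suff -> : (fun h : R => F (h%:A + a)) = (fun h => F (a + h)) by [].
by apply: funext => h; rewrite [h%:A]mulr1 addrC.
Qed.

End Translation.

Section DirectionalShifts.
Variables (R : realType) (n : nat).
Local Notation V := 'rV[R]_(n.+1).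
Implicit Types (g : V -> R -> R) (d : option 'I_(n.+1)) (p q : V * R) (u v e : R).

Definition joint g p : R := g p.1 p.2.

Definition dshift d u p : V * R :=
  match d with
  | Some i => (p.1 + u *: delta_mx 0 i, p.2)
  | None => (p.1, p.2 + u)
  end.

Lemma dshift0 d p : dshift d 0 p = p.
Proof. by case: d => [i|]; case: p => x t /=; rewrite ?scale0r addr0. Qed.

Lemma dshiftD d u v p : dshift d (u + v) p = dshift d v (dshift d u p).
Proof. by case: d => [i|] /=; rewrite ?scalerDl addrA. Qed.

Lemma dshiftC d1 d2 u v p : dshift d1 u (dshift d2 v p) = dshift d2 v (dshift d1 u p).
Proof. by case: d1 => [i|]; case: d2 => [j|] //=; rewrite addrAC. Qed.

Lemma ball_dshift d p e u : 0 < e -> `|u| < e -> ball p e (dshift d u p).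
Proof.
case: p => x t e0 ue; case: d => [i|]; split => /=; try exact: ballxx.
- split => // a b; rewrite /ball /= !mxE opprD addNKr normrN.
  by apply: le_lt_trans ue; case: (_ && _); rewrite ?mulr1 ?mulr0 ?normr0.
- by rewrite /ball /= opprD addNKr normrN.
Qed.

Lemma ball_dshift2 d1 d2 p e u v : 0 < e -> `|u| < e / 2 -> `|v| < e / 2 ->
  ball p e (dshift d1 u (dshift d2 v p)).
Proof.
move=> e0 ue ve; have e20 : 0 < e / 2 by rewrite divr_gt0.
rewrite [e]splitr; apply: ball_triangle (ball_dshift _ _ e20 ve) _.
exact: ball_dshift.
Qed.

Lemma open_dshift2 (S : set (V * R)) p : open S -> S p ->
  exists2 e, 0 < e & forall d1 d2 u v, `|u| < e -> `|v| < e ->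
    S (dshift d1 u (dshift d2 v p)).
Proof.
move=> oS Sp; have /nbhs_ballP[e e0 eS] : nbhs p S by exact: open_nbhs_nbhs.
exists (e / 2); first by rewrite divr_gt0.
by move=> d1 d2 u v ue ve; apply: eS; apply: ball_dshift2.
Qed.

Lemma continuous_dshift2 (K : V * R -> R) p : {for p, continuous K} ->
  forall eps, 0 < eps -> exists2 e, 0 < e & forall d1 d2 u v,
    `|u| < e -> `|v| < e -> `|K (dshift d1 u (dshift d2 v p)) - K p| < eps.
Proof.
move=> cK eps eps0.
have := cvgr_dist_lt _ _ cK _ eps0 => /(_ (nbhs_filter p)) /nbhs_ballP[e e0 eK].
exists (e / 2); first by rewrite divr_gt0.
by move=> d1 d2 u v ue ve; rewrite distrC; apply: eK; apply: ball_dshift2.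
Qed.

Lemma pdir_dshift d g p : pdir d g p.1 p.2 = derive1 (fun u => joint g (dshift d u p)) 0.
Proof. by case: d => [i|] //=; rewrite /t_pd derive1_translate. Qed.

Lemma derivable_dir_dshift d g p :
  derivable_dir d g p.1 p.2 -> derivable (fun u => joint g (dshift d u p)) 0 1.
Proof.
case: d => [i|] //= /derivable1P.
suff -> : (fun h : R => g p.1 (h%:A + p.2)) = (fun h => joint g (p.1, p.2 + h)) by [].
by apply: funext => h; rewrite /joint /= [h%:A]mulr1 addrC.
Qed.

Lemma is_derive_dshift d g q u0 :
  derivable_dir d g (dshift d u0 q).1 (dshift d u0 q).2 ->
  is_derive u0 1 (fun u => joint g (dshift d u q)) (joint (pdir d g) (dshift d u0 q)).
Proof.
move=> /derivable_dir_dshift dg; rewrite /joint pdir_dshift.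
have shiftE : (fun u => joint g (dshift d u (dshift d u0 q)))
            = (fun h => joint g (dshift d (u0 + h) q)).
  by apply: funext => h; rewrite dshiftD.
by rewrite shiftE in dg *; apply: is_derive_translate.
Qed.

Lemma is_derive_dshift2 d1 d2 g p u v :
  derivable_dir d2 g (dshift d1 u (dshift d2 v p)).1 (dshift d1 u (dshift d2 v p)).2 ->
  is_derive v 1 (fun v' => joint g (dshift d1 u (dshift d2 v' p)))
    (joint (pdir d2 g) (dshift d1 u (dshift d2 v p))).
Proof.
have swapE : (fun v' => joint g (dshift d1 u (dshift d2 v' p)))
           = (fun v' => joint g (dshift d2 v' (dshift d1 u p))).
  by apply: funext => v'; rewrite dshiftC.
by rewrite swapE dshiftC; apply: is_derive_dshift.
Qed.

Lemma pdir_swap_at (S : set (V * R)) g d1 d2 p : open S -> S p ->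
  (forall q, S q -> [/\ derivable_dir d1 g q.1 q.2, derivable_dir d2 g q.1 q.2,
       derivable_dir d2 (pdir d1 g) q.1 q.2 & derivable_dir d1 (pdir d2 g) q.1 q.2]) ->
  {for p, continuous (joint (pdir d2 (pdir d1 g)))} ->
  {for p, continuous (joint (pdir d1 (pdir d2 g)))} ->
  pdir d2 (pdir d1 g) p.1 p.2 = pdir d1 (pdir d2 g) p.1 p.2.
Proof.
move=> oS Sp dg c21 c12.
have [e e0 eS] := open_dshift2 oS Sp.
pose at_uv (G : V -> R -> R) u v := joint G (dshift d1 u (dshift d2 v p)).
have := @mixed_partials_eq R (at_uv g) (at_uv (pdir d1 g)) (at_uv (pdir d2 g))
  (at_uv (pdir d2 (pdir d1 g))) (at_uv (pdir d1 (pdir d2 g))) e e0.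
rewrite /at_uv /= !dshift0; apply.
  move=> u v ue ve; have [dg1 dg2 dg21 dg12] := dg _ (eS d1 d2 u v ue ve).
  by split; [apply: is_derive_dshift|apply: is_derive_dshift2
            |apply: is_derive_dshift2|apply: is_derive_dshift].
move=> eps eps0.
have [k1 k10 hk1] := continuous_dshift2 c21 eps0.
have [k2 k20 hk2] := continuous_dshift2 c12 eps0.
exists (Num.min k1 k2); first by rewrite lt_min k10 k20.
by move=> u v; rewrite !lt_min => /andP[u1 u2] /andP[v1 v2]; split; [apply: hk1|apply: hk2].
Qed.

Lemma pdir_local (S : set (V * R)) d g1 g2 x t : open S -> S (x, t) ->
  (forall y s, S (y, s) -> g1 y s = g2 y s) -> pdir d g1 x t = pdir d g2 x t.
Proof.
move=> oS Sxt g12; rewrite -[x]/((x, t).1) -[t]/((x, t).2) !pdir_dshift !derive1E.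
apply: near_eq_derive; have [e e0 eS] := open_dshift2 oS Sxt.
apply/nbhs_ballP; exists e => // u /=; rewrite /ball /= sub0r normrN => ue.
have := eS d d u 0 ue; rewrite normr0 dshift0 => /(_ e0).
by rewrite /joint; case: dshift => y s /= /g12.
Qed.

Lemma sp_pd_local (S : set (V * R)) k g1 g2 x t : open S -> S (x, t) ->
  (forall y s, S (y, s) -> g1 y s = g2 y s) -> sp_pd k g1 x t = sp_pd k g2 x t.
Proof. exact: (@pdir_local S (Some k)). Qed.

End DirectionalShifts.

Section PointwiseDerivatives.
Variable R : realType.
Implicit Types (F G : R -> R) (a c dF dG : R).

Lemma is_deriveD_fun F G a dF dG : is_derive a 1 F dF -> is_derive a 1 G dG ->
  is_derive a 1 (fun u => F u + G u) (dF + dG).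
Proof. exact: is_deriveD. Qed.

Lemma is_deriveB_fun F G a dF dG : is_derive a 1 F dF -> is_derive a 1 G dG ->
  is_derive a 1 (fun u => F u - G u) (dF - dG).
Proof. exact: is_deriveB. Qed.

Lemma is_deriveM_fun F G a dF dG : is_derive a 1 F dF -> is_derive a 1 G dG ->
  is_derive a 1 (fun u => F u * G u) (dF * G a + F a * dG).
Proof.
move=> dFa dGa; apply: is_derive_eq (is_deriveM dFa dGa) _.
by rewrite -[F a *: dG]/(F a * dG) -[G a *: dF]/(G a * dF) addrC mulrC.
Qed.

Lemma is_deriveX2_fun F a dF : is_derive a 1 F dF ->
  is_derive a 1 (fun u => F u ^+ 2) (2 * (F a * dF)).
Proof.
move=> dFa; have -> : (fun u => F u ^+ 2) = (fun u => F u * F u).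
  by apply: funext => u; rewrite expr2.
by apply: is_derive_eq (is_deriveM_fun dFa dFa) _; ring.
Qed.

Lemma is_derive_sum_fun m (F : 'I_m -> R -> R) a (dF : 'I_m -> R) :
  (forall i, is_derive a 1 (F i) (dF i)) ->
  is_derive a 1 (fun u => \sum_(i < m) F i u) (\sum_(i < m) dF i).
Proof. by move=> dFa; have := is_derive_sum dFa; rewrite fct_sumE. Qed.

Lemma is_derive_cst_fun a c : is_derive a 1 (fun _ : R => c) 0.
Proof. exact: is_derive_cst. Qed.

End PointwiseDerivatives.

Section SpaceTimeCalculus.
Variables (R : realType) (n : nat).
Local Notation V := 'rV[R]_(n.+1).
Implicit Types (g h : V -> R -> R) (x : V) (t l : R).

Definition sqgrad g x t : R := \sum_i sp_pd i g x t ^+ 2.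

Definition perelman_W (f : V -> R -> R) (tau : R -> R) x t : R :=
  tau t * (2 * lap f x t - sqgrad f x t) + f x t - (n.+1)%:R.

Lemma lapE g x t : lap g x t = \sum_i sp_pd i (sp_pd i g) x t.
Proof. by []. Qed.

Lemma dotv_grad g h x t :
  dotv (grad g x t) (grad h x t) = \sum_i sp_pd i g x t * sp_pd i h x t.
Proof. by apply: eq_bigr => i _; rewrite !mxE. Qed.

Lemma dotv_grad_sqgrad g x t : dotv (grad g x t) (grad g x t) = sqgrad g x t.
Proof. by rewrite dotv_grad; apply: eq_bigr => i _; rewrite expr2. Qed.

Lemma sp_pd_of_is_derive k g x t l :
  is_derive (0 : R) 1 (fun u => g (x + u *: delta_mx 0 k) t) l -> sp_pd k g x t = l.
Proof. by move=> dg; rewrite /sp_pd derive1E derive_val. Qed.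

Lemma t_pd_of_is_derive g x t l : is_derive t 1 (fun s => g x s) l -> t_pd g x t = l.
Proof. by move=> dg; rewrite /t_pd derive1E derive_val. Qed.

Lemma is_derive_sp_pd k g x t : derivable_dir (Some k) g x t ->
  is_derive (0 : R) 1 (fun u => g (x + u *: delta_mx 0 k) t) (sp_pd k g x t).
Proof. by move=> dg; rewrite /sp_pd derive1E; apply: derivableP. Qed.

Lemma is_derive_t_pd g x t : derivable_dir None g x t ->
  is_derive t 1 (fun s => g x s) (t_pd g x t).
Proof. by move=> dg; rewrite /t_pd derive1E; apply: derivableP. Qed.

End SpaceTimeCalculus.

Lemma sum_sqr_sub_delta (F : fieldType) m (h : 'I_m -> 'I_m -> F) (k : F) :
  \sum_i \sum_j (h i j - (i == j)%:R / k) ^+ 2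
  = \sum_i \sum_j h i j ^+ 2 - 2 / k * \sum_i h i i + m%:R / k ^+ 2.
Proof.
have row i : \sum_j (h i j - (i == j)%:R / k) ^+ 2
           = \sum_j h i j ^+ 2 - 2 / k * h i i + 1 / k ^+ 2.
  rewrite (bigD1 i) // [in RHS](bigD1 i) //= eqxx.
  rewrite (eq_bigr (fun j => h i j ^+ 2)) => [|j /negbTE]; last first.
    by rewrite eq_sym => ->; rewrite mul0r subr0.
  by rewrite /= -exprVn; ring.
rewrite (eq_bigr _ (fun i _ => row i)) big_split sumrB -mulr_sumr /=.
by rewrite sumr_const card_ord -mulr_natl; ring.
Qed.

Section SmoothCalculus.
Variables (R : realType) (n : nat).
Local Notation V := 'rV[R]_(n.+1).
Local Notation D := sp_pd.
Local Notation Dt := t_pd.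
Variables (S : set (V * R)) (f : V -> R -> R).
Hypotheses (oS : open S) (hf : smooth_on S f).
Implicit Types (x : V) (t : R).

Inductive iterated_partial : (V -> R -> R) -> Prop :=
  | iterated_partial_self : iterated_partial f
  | iterated_partial_sp_pd i g : iterated_partial g -> iterated_partial (D i g)
  | iterated_partial_t_pd g : iterated_partial g -> iterated_partial (Dt g).

Lemma iterated_partial_derivable d g x t :
  iterated_partial g -> S (x, t) -> derivable_dir d g x t.
Proof.
move=> ipg Sxt; have [ds ->] : exists ds, g = iter_pd ds f.
  elim: ipg => [|i h _ [ds ->]|h _ [ds ->]].
  - by exists [::].
  - by exists (Some i :: ds).
  - by exists (None :: ds).
exact: (hf ds Sxt).1.
Qed.

Lemma iter_pd_swap ds d1 d2 x t : S (x, t) ->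
  pdir d2 (pdir d1 (iter_pd ds f)) x t = pdir d1 (pdir d2 (iter_pd ds f)) x t.
Proof.
move=> Sxt; apply: (pdir_swap_at (p := (x, t)) oS Sxt).
- by move=> q Sq; split; [exact: (hf ds Sq).1|exact: (hf ds Sq).1
    |exact: (hf (d1 :: ds) Sq).1|exact: (hf (d2 :: ds) Sq).1].
- exact: (hf (d2 :: d1 :: ds) Sxt).2.
- exact: (hf (d1 :: d2 :: ds) Sxt).2.
Qed.

(* [eapply] rather than ssreflect's [apply:], whose unification is far slower
   on these goals. *)
Ltac derive_leaf :=
  first [eapply is_derive_sp_pd | eapply is_derive_t_pd];
  eapply iterated_partial_derivable; [by repeat constructor | assumption].

Ltac derive_expr := repeat (cbv beta; lazymatch goal with
  | |- is_derive _ 1 (fun _ => ?c) _ => eapply is_derive_cst_fun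
  | |- is_derive _ 1 (fun _ => _ - _) _ => eapply is_deriveB_fun
  | |- is_derive _ 1 (fun _ => _ + _) _ => eapply is_deriveD_fun
  | |- is_derive _ 1 (fun _ => _ ^+ 2) _ => eapply is_deriveX2_fun
  | |- is_derive _ 1 (fun _ => _ * _) _ => eapply is_deriveM_fun
  | |- _ => first [eassumption | eapply is_derive_sum_fun; intro | derive_leaf]
  end).

Ltac derive_simpl := cbv beta; rewrite ?scale0r ?addr0 ?mul0r ?mulr0 ?add0r ?subr0.

Lemma sp_pd_lap k x t : S (x, t) -> D k (lap f) x t = \sum_i D k (D i (D i f)) x t.
Proof.
by move=> Sxt; apply: sp_pd_of_is_derive; apply: is_derive_sum_fun => i; derive_expr.
Qed.

Lemma t_pd_lap x t : S (x, t) -> Dt (lap f) x t = \sum_i Dt (D i (D i f)) x t.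
Proof.
by move=> Sxt; apply: t_pd_of_is_derive; apply: is_derive_sum_fun => i; derive_expr.
Qed.

Lemma sp_pd_sqgrad k x t : S (x, t) ->
  D k (sqgrad f) x t = 2 * \sum_i D i f x t * D k (D i f) x t.
Proof.
move=> Sxt; apply: sp_pd_of_is_derive; rewrite mulr_sumr.
apply: is_derive_sum_fun => i; eapply is_derive_eq; first by derive_expr.
by derive_simpl.
Qed.

Lemma t_pd_sqgrad x t : S (x, t) ->
  Dt (sqgrad f) x t = 2 * \sum_i D i f x t * Dt (D i f) x t.
Proof.
move=> Sxt; apply: t_pd_of_is_derive; rewrite mulr_sumr.
by apply: is_derive_sum_fun => i; derive_expr.
Qed.

Lemma sp_pd2_lap k x t : S (x, t) ->
  D k (D k (lap f)) x t = \sum_i D k (D k (D i (D i f))) x t.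
Proof.
(* [D k (lap f)] is not an iterated partial of [f]: differentiate instead its
   expansion, which agrees with it on the open set [S]. *)
move=> Sxt; transitivity (D k (fun y s => \sum_i D k (D i (D i f)) y s) x t).
  exact: (sp_pd_local k oS Sxt (fun y s Sys => sp_pd_lap k Sys)).
by apply: sp_pd_of_is_derive; apply: is_derive_sum_fun => i; derive_expr.
Qed.

Lemma sp_pd2_sqgrad k x t : S (x, t) ->
  D k (D k (sqgrad f)) x t
  = 2 * \sum_i (D k (D i f) x t * D k (D i f) x t + D i f x t * D k (D k (D i f)) x t).
Proof.
move=> Sxt; transitivity (D k (fun y s => 2 * \sum_i D i f y s * D k (D i f) y s) x t).
  exact: (sp_pd_local k oS Sxt (fun y s Sys => sp_pd_sqgrad k Sys)).
apply: sp_pd_of_is_derive; eapply is_derive_eq; first by derive_expr.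
by derive_simpl.
Qed.

Lemma t_pd_sp_pd i x t : S (x, t) -> Dt (D i f) x t = D i (Dt f) x t.
Proof. exact: (iter_pd_swap [::] (Some i) None). Qed.

Lemma t_pd_sp_pd2 i x t : S (x, t) -> Dt (D i (D i f)) x t = D i (D i (Dt f)) x t.
Proof.
move=> Sxt; transitivity (D i (Dt (D i f)) x t).
  exact: (iter_pd_swap [:: Some i] (Some i) None Sxt).
exact: (sp_pd_local i oS Sxt (fun y s Sys => t_pd_sp_pd i Sys)).
Qed.

Lemma sp_pd3_swap k i x t : S (x, t) -> D k (D k (D i f)) x t = D i (D k (D k f)) x t.
Proof.
move=> Sxt; transitivity (D k (D i (D k f)) x t).
  exact: (sp_pd_local k oS Sxt (fun y s Sys => iter_pd_swap [::] (Some i) (Some k) Sys)).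
exact: (iter_pd_swap [:: Some k] (Some i) (Some k) Sxt).
Qed.

Lemma lap_sqgrad x t : S (x, t) ->
  lap (sqgrad f) x t = 2 * (\sum_i \sum_j D i (D j f) x t ^+ 2)
                       + 2 * \sum_i D i f x t * D i (lap f) x t.
Proof.
move=> Sxt; rewrite lapE (eq_bigr _ (fun k _ => sp_pd2_sqgrad k Sxt)) -mulr_sumr -mulrDr.
rewrite (eq_bigr _ (fun k _ => big_split _ _ _ _ _)) big_split /=; congr (2 * (_ + _)).
rewrite exchange_big; apply: eq_bigr => i _ /=; rewrite sp_pd_lap // mulr_sumr.
by apply: eq_bigr => k _; rewrite sp_pd3_swap.
Qed.

Variable tau : R -> R.
Local Notation W := (perelman_W f tau).

Lemma sp_pd_W k x t : S (x, t) ->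
  D k W x t = tau t * (2 * D k (lap f) x t - D k (sqgrad f) x t) + D k f x t.
Proof.
move=> Sxt; rewrite sp_pd_lap // sp_pd_sqgrad //.
apply: sp_pd_of_is_derive; rewrite /perelman_W /lap /sqgrad.
eapply is_derive_eq; first by derive_expr.
by derive_simpl; rewrite -mulr_sumr.
Qed.

Lemma sp_pd2_W k x t : S (x, t) ->
  D k (D k W) x t
  = tau t * (2 * D k (D k (lap f)) x t - D k (D k (sqgrad f)) x t) + D k (D k f) x t.
Proof.
move=> Sxt; rewrite sp_pd2_lap // sp_pd2_sqgrad //.
transitivity (D k (fun y s => tau s * (2 * \sum_i D k (D i (D i f)) y s
  - 2 * \sum_i D i f y s * D k (D i f) y s) + D k f y s) x t).
  apply: (sp_pd_local k oS Sxt) => y s Sys.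
  by rewrite sp_pd_W // sp_pd_lap // sp_pd_sqgrad.
apply: sp_pd_of_is_derive; eapply is_derive_eq; first by derive_expr.
by derive_simpl.
Qed.

Lemma lap_W x t : S (x, t) ->
  lap W x t = tau t * (2 * lap (lap f) x t - lap (sqgrad f) x t) + lap f x t.
Proof.
move=> Sxt; transitivity (\sum_k (tau t * (2 * D k (D k (lap f)) x t
    - D k (D k (sqgrad f)) x t) + D k (D k f) x t)).
  by apply: eq_bigr => k _; exact: sp_pd2_W.
by rewrite big_split /= -mulr_sumr sumrB -mulr_sumr.
Qed.

Lemma t_pd_W x t : is_derive t 1 tau (-1) -> S (x, t) ->
  Dt W x t = - (2 * lap f x t - sqgrad f x t)
             + tau t * (2 * Dt (lap f) x t - Dt (sqgrad f) x t) + Dt f x t.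
Proof.
move=> dtau Sxt; rewrite t_pd_lap // t_pd_sqgrad //.
apply: t_pd_of_is_derive; rewrite /perelman_W /lap /sqgrad.
eapply is_derive_eq; first by derive_expr.
by derive_simpl; rewrite mulN1r -mulr_sumr.
Qed.

Lemma dotv_grad_W x t : S (x, t) ->
  dotv (grad W x t) (grad f x t)
  = tau t * (2 * \sum_i D i f x t * D i (lap f) x t - \sum_i D i f x t * D i (sqgrad f) x t)
    + sqgrad f x t.
Proof.
move=> Sxt; transitivity (\sum_i (tau t * (2 * (D i f x t * D i (lap f) x t)
    - D i f x t * D i (sqgrad f) x t) + D i f x t ^+ 2)).
  by rewrite dotv_grad; apply: eq_bigr => i _; rewrite sp_pd_W //; ring.
by rewrite big_split /= -mulr_sumr sumrB -mulr_sumr.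
Qed.

Variable c : R.
Hypothesis heat : forall x t, S (x, t) ->
  Dt f x t + lap f x t = sqgrad f x t + c / (2 * tau t).

Lemma sp_pd_t_pd_heat k x t : S (x, t) ->
  D k (Dt f) x t = D k (sqgrad f) x t - D k (lap f) x t.
Proof.
move=> Sxt; rewrite sp_pd_sqgrad // sp_pd_lap //.
transitivity (D k (fun y s => sqgrad f y s - lap f y s + c / (2 * tau s)) x t).
  by apply: (sp_pd_local k oS Sxt) => y s Sys; rewrite addrAC -heat // addrK.
apply: sp_pd_of_is_derive; rewrite /sqgrad /lap.
eapply is_derive_eq; first by derive_expr.
by derive_simpl; rewrite -mulr_sumr.
Qed.

Lemma sp_pd2_t_pd_heat k x t : S (x, t) ->
  D k (D k (Dt f)) x t = D k (D k (sqgrad f)) x t - D k (D k (lap f)) x t.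
Proof.
move=> Sxt; rewrite sp_pd2_sqgrad // sp_pd2_lap //.
transitivity (D k (fun y s => 2 * \sum_i D i f y s * D k (D i f) y s
  - \sum_i D k (D i (D i f)) y s) x t).
  apply: (sp_pd_local k oS Sxt) => y s Sys.
  by rewrite sp_pd_t_pd_heat // sp_pd_sqgrad // sp_pd_lap.
apply: sp_pd_of_is_derive; eapply is_derive_eq; first by derive_expr.
by derive_simpl.
Qed.

Lemma t_pd_lap_heat x t : S (x, t) ->
  Dt (lap f) x t = lap (sqgrad f) x t - lap (lap f) x t.
Proof.
move=> Sxt; rewrite t_pd_lap // !lapE -sumrB; apply: eq_bigr => i _.
by rewrite t_pd_sp_pd2 // sp_pd2_t_pd_heat.
Qed.

Lemma t_pd_sqgrad_heat x t : S (x, t) ->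
  Dt (sqgrad f) x t = 2 * (\sum_i D i f x t * D i (sqgrad f) x t
                           - \sum_i D i f x t * D i (lap f) x t).
Proof.
move=> Sxt; rewrite t_pd_sqgrad // -sumrB; congr (2 * _); apply: eq_bigr => i _.
by rewrite t_pd_sp_pd // sp_pd_t_pd_heat // mulrBr.
Qed.

End SmoothCalculus.

Unset Implicit Arguments.

Theorem proposition3p1 (R : realType) (n : nat) (T : R)
  (Omega0 : set 'rV[R]_(n.+1)) (Omega : R -> set 'rV[R]_(n.+1))
  (phi : R -> 'rV[R]_(n.+1) -> 'rV[R]_(n.+1))
  (f : 'rV[R]_(n.+1) -> R -> R) (tau : R -> R) :
  open Omega0 ->
  (forall t, 0 < t < T -> open (Omega t)) ->
  (* the space-time domain swept by the moving domains is open *)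
  open [set p : 'rV[R]_(n.+1) * R | 0 < p.2 < T /\ Omega p.2 p.1] ->
  (* phi_t : closure Omega0 -> closure Omega_t is a bijection, smooth in (q,t) *)
  (forall t, 0 < t < T ->
     {in closure Omega0 &, injective (phi t)} /\
     phi t @` closure Omega0 = closure (Omega t)) ->
  (forall i : 'I_(n.+1),
     smooth_on [set p : 'rV[R]_(n.+1) * R | 0 < p.2 < T]
               (fun q t => phi t q 0 i)) ->
  (* evolution dx/dt = - grad f(x,t) for x = phi_t(q) in Omega_t *)
  (forall t q, 0 < t < T -> closure Omega0 q -> Omega t (phi t q) ->
     forall i : 'I_(n.+1),
       derive1 (fun s => phi s q 0 i) t = - sp_pd i f (phi t q) t) ->
  (* f smooth *)
  smooth_on [set p : 'rV[R]_(n.+1) * R | 0 < p.2 < T /\ Omega p.2 p.1] f ->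
  (* the equation for f *)
  (forall t x, 0 < t < T -> Omega t x ->
     t_pd f x t + lap f x t
       = dotv (grad f x t) (grad f x t) + (n.+1)%:R / (2 * tau t)) ->
  (* tau > 0, dtau/dt = -1 *)
  (forall t, 0 < t < T -> 0 < tau t /\ is_derive t 1 tau (-1)) ->
  let W := fun x t =>
    tau t * (2 * lap f x t - dotv (grad f x t) (grad f x t)) + f x t - (n.+1)%:R in
  forall t x, 0 < t < T -> Omega t x ->
    ddt f W x t + lap W x t
      = 2 * tau t * (\sum_(i < n.+1) \sum_(j < n.+1)
            (sp_pd i (sp_pd j f) x t - (i == j)%:R / (2 * tau t)) ^+ 2)
        + dotv (grad W x t) (grad f x t).
Proof.
(* [ddt] is d_t - grad(.) . grad f by definition. *)
move=> _ _ oS _ _ _ hf heat htau W t x tI Ox.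
set S := [set p | _] in oS hf.
have Sxt : S (x, t) by split.
have heatS y s : S (y, s) ->
    t_pd f y s + lap f y s = sqgrad f y s + (n.+1)%:R / (2 * tau s).
  by case=> sI Oy; rewrite -dotv_grad_sqgrad; apply: heat.
have [tau_gt0 dtau] := htau t tI.
have -> : W = perelman_W f tau.
  by apply: funext => y; apply: funext => s; rewrite /W dotv_grad_sqgrad.
have ft : t_pd f x t = sqgrad f x t + (n.+1)%:R / (2 * tau t) - lap f x t.
  by rewrite -heatS // addrK.
rewrite /ddt (dotv_grad_W hf tau Sxt) (t_pd_W hf dtau Sxt) (lap_W oS hf tau Sxt).
rewrite (t_pd_lap_heat oS hf heatS Sxt) (t_pd_sqgrad_heat oS hf heatS Sxt).
rewrite (lap_sqgrad oS hf Sxt) sum_sqr_sub_delta ft -/(lap f x t).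
(* [field] is much faster once the big atoms are opaque. *)
set hess_sq := \sum_i \sum_j _ ^+ 2.
set gradf_gradlap := \sum_i _ * sp_pd i (lap f) x t.
set gradf_gradsqgrad := \sum_i _ * sp_pd i (sqgrad f) x t.
move: (lap f x t) (sqgrad f x t) (lap (lap f) x t) => L G LL.
clearbody hess_sq gradf_gradlap gradf_gradsqgrad.
by field; rewrite gt_eqF.
Qed.
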